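(* Let $\{M_i(t_i),t_i\ge0\}$, $i=1,\dots,d$, be independent one-parameter integrable processes, let $\mathcal{F}^{(i)}(t_i)=\sigma(M_i(s_i):s_i\le t_i)$ and $\mathcal{F}(\mathbf{t})=\bigvee_{i=1}^d\mathcal{F}^{(i)}(t_i)$ for $\mathbf{t}=(t_1,\dots,t_d)\in\mathbb{R}^d_+$. The following are equivalent: (i) $\{\sum_{i=1}^dM_i(t_i),\mathbf{t}\in\mathbb{R}^d_+\}$ is a $d$-parameter $\{\mathcal{F}(\mathbf{t})\}$-martingale and, for each $i$, $\mathbb{E}M_i(s_i)=\mathbb{E}M_i(t_i)$ for all $s_i,t_i\ge0$; (ii) for every $1\le d'\le d$, $\{\sum_{i=1}^{d'}M_i(t_i),(t_1,\dots,t_{d'})\in\mathbb{R}^{d'}_+\}$ is a $d'$-parameter martingale with respect to $\mathcal{F}'(t_1,\dots,t_{d'})=\bigvee_{i=1}^{d'}\mathcal{F}^{(i)}(t_i)$; (iii) for each $i=1,\dots,d$, $\{M_i(t_i),t_i\ge0\}$ is a one-parameter martingale with respect to its natural filtration.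
   Context: $\mathbb{R}^d_+$ carries the componentwise order $\preceq$. A $d$-parameter filtration is a family $\{\mathcal{F}(\mathbf{t})\}$ of complete sub-$\sigma$-fields with $\mathcal{F}(\mathbf{s})\subseteq\mathcal{F}(\mathbf{t})$ for $\mathbf{s}\preceq\mathbf{t}$. A $d$-parameter martingale is an integrable adapted process $M(\mathbf{t})$ with $\mathbb{E}(M(\mathbf{t})\mid\mathcal{F}(\mathbf{s}))=M(\mathbf{s})$ a.s. whenever $\mathbf{s}\preceq\mathbf{t}$. *)

From HB Require Import structures.
From mathcomp Require Import all_boot all_order all_algebra.
From mathcomp Require Import all_classical all_reals all_analysis.
Set Implicit Arguments. Unset Strict Implicit. Unset Printing Implicit Defensive.
Import Order.TTheory GRing.Theory Num.Theory.
Local Open Scope classical_set_scope.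
Local Open Scope ring_scope.

Section defs.
Context {d0 : measure_display} {T : measurableType d0} {R : realType}.

Definition measurable_wrt (G : set (set T)) (X : T -> R) : Prop :=
  forall B : set R, measurable B -> G (X @^-1` B).

Definition sjoin (n : nat) (G : 'I_n -> set (set T)) : set (set T) :=
  <<s \bigcup_(i in [set: 'I_n]) G i >>.

Definition natF (X : R -> T -> R) (t : R) : set (set T) :=
  <<s \bigcup_(s in `[0, t]) preimage_set_system setT (X s) measurable >>.

Definition procF (X : R -> T -> R) : set (set T) :=
  <<s \bigcup_(s in `[0, +oo[) preimage_set_system setT (X s) measurable >>.

Definition pos_param (n : nat) (t : 'I_n -> R) : Prop := forall i, 0 <= t i.
Definition cwle (n : nat) (s t : 'I_n -> R) : Prop := forall i, s i <= t i.

(* n-parameter martingale with respect to filtration F on R^n_+: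
   integrable, adapted, and E(X t | F s) = X s a.s. for s <= t, the latter
   written out via the defining property of conditional expectation. *)
Definition nparam_martingale (P : probability T R) (n : nat)
    (F : ('I_n -> R) -> set (set T)) (X : ('I_n -> R) -> T -> R) : Prop :=
  (forall t, pos_param t -> P.-integrable setT (EFin \o X t)) /\
  (forall t, pos_param t -> measurable_wrt (F t) (X t)) /\
  (forall s t, pos_param s -> pos_param t -> cwle s t ->
     forall A, F s A ->
       (\int[P]_(w in A) (X t w)%:E = \int[P]_(w in A) (X s w)%:E)%E).

Definition martingale1 (P : probability T R)
    (F : R -> set (set T)) (X : R -> T -> R) : Prop :=
  (forall t, 0 <= t -> P.-integrable setT (EFin \o X t)) /\
  (forall t, 0 <= t -> measurable_wrt (F t) (X t)) /\
  (forall s t, 0 <= s -> s <= t ->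
     forall A, F s A ->
       (\int[P]_(w in A) (X t w)%:E = \int[P]_(w in A) (X s w)%:E)%E).

Definition indep_processes (P : probability T R) (n : nat)
    (M : 'I_n -> R -> T -> R) : Prop :=
  forall A : 'I_n -> set T, (forall i, procF (M i) (A i)) ->
    P (\bigcap_(i in [set: 'I_n]) A i) = (\prod_(i < n) P (A i))%E.

End defs.

From HB Require Import structures.
From mathcomp Require Import all_boot all_order all_algebra.
From mathcomp Require Import all_classical all_reals all_analysis.
From mathcomp Require Import measurable_realfun.
Import Order.TTheory GRing.Theory Num.Theory.
Local Open Scope classical_set_scope.
Local Open Scope ring_scope.

(* (i) -> (iii): test the d-parameter property between s e_i and t e_i on
   events of F^(i)(s); the coordinates j != i stay at time 0 and cancel.
   (iii) -> (i), (ii): on a rectangle A = \bigcap_j A_j with A_j in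
   F^(j)(s_j), independence gives E[M_i(t_i); A] = P(\bigcap_(j != i) A_j)
   E[M_i(t_i); A_i], and the martingale property of M_i replaces t_i by s_i.
   Rectangles form a pi-system generating F(s) and the events on which the
   integrals of the two sums agree form a lambda-system, so Dynkin's theorem
   concludes; subfamilies of independent processes are independent.  Equal
   means come from testing on the whole space. *)

Section generated_sigma_algebra.
Context {T : Type} {G : set (set T)}.

Lemma g_sigma_setT : <<s G >> setT.
Proof. by move=> M [[M0 MC _] _]; rewrite -(setD0 setT); exact: MC. Qed.

Lemma g_sigma_setI : setI_closed <<s G >>.
Proof.
have GC A : <<s G >> A -> <<s G >> (~` A) by rewrite -setTD; exact: sigma_algebraCD.
move=> A B GA GB; rewrite -[A `&` B]setCK setCI -bigcup2E; apply: (GC).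
by apply: sigma_algebra_bigcup => -[|[|k]] /=;
  [exact: GC|exact: GC|exact: sigma_algebra0].
Qed.

End generated_sigma_algebra.

Section natural_filtration.
Context {d0 : measure_display} {T : measurableType d0} {R : realType}.
Implicit Type X : R -> T -> R.

Lemma natF_adapted X t : 0 <= t -> measurable_wrt (natF X t) (X t).
Proof.
move=> t0 B mB; apply: sub_gen_smallest.
exists t; first by rewrite /= in_itv /= t0 lexx.
by exists B => //; rewrite setTI.
Qed.

Lemma natF_sub_procF X t : natF X t `<=` procF X.
Proof.
apply: smallest_sub; first exact: smallest_sigma_algebra.
move=> A [s]; rewrite /= in_itv /= => /andP[s0 _] XsA; apply: sub_gen_smallest.
by exists s => //; rewrite /= in_itv /= s0.
Qed.

Lemma procF_adapted X t : 0 <= t -> measurable_wrt (procF X) (X t).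
Proof. by move=> t0 B mB; apply: natF_sub_procF; exact: natF_adapted. Qed.

Lemma procF_sub_measurable X : (forall t, 0 <= t -> measurable_fun setT (X t)) ->
  procF X `<=` measurable.
Proof.
move=> mX; apply: smallest_sub; first exact: sigma_algebra_measurable.
by move=> A [s]; rewrite /= in_itv /= andbT => s0 [B mB <-]; exact: mX.
Qed.

Lemma measurable_wrt_sum n (G : set (set T)) (f : 'I_n -> T -> R) :
  (forall i, measurable_wrt <<s G >> (f i)) ->
  measurable_wrt <<s G >> (fun w => \sum_(i < n) f i w).
Proof.
move=> mf B mB.
have : measurable_fun (setT : set (g_sigma_algebraType G))
                      (fun w => \sum_(i < n) f i w).
  by apply: measurable_sum => i _ Y mY; rewrite setTI; exact: mf.
by move=> /(_ measurableT B mB); rewrite setTI.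
Qed.

End natural_filtration.

Section integral_lemmas.
Context {d0 : measure_display} {T : measurableType d0} {R : realType}.
Context {mu : {measure set T -> \bar R}}.
Local Open Scope ereal_scope.

Lemma measurable_int_EFin (f : T -> R) :
  mu.-integrable setT (EFin \o f) -> measurable_fun setT f.
Proof. by move=> /(measurable_int mu) /measurable_EFinP. Qed.

Lemma integral_setC (f : T -> R) (A : set T) : measurable A ->
  mu.-integrable setT (EFin \o f) ->
  \int[mu]_(x in ~` A) (f x)%:E = \int[mu]_x (f x)%:E - \int[mu]_(x in A) (f x)%:E.
Proof.
move=> mA intf.
rewrite -(setUv A) integral_setU //; last 3 first.
- exact: measurableC.
- by rewrite setUv; exact: measurable_int intf.
- by apply/disj_set2P; rewrite setICr.
rewrite (addeC (\int[mu]_(x in A) _)) addeK //.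
exact: (integrable_fin_num mA (integrableS measurableT mA (@subsetT _ A) intf)).
Qed.

Lemma eq_integral_g_sigma (G : set (set T)) (f g : T -> R) :
  mu.-integrable setT (EFin \o f) -> mu.-integrable setT (EFin \o g) ->
  setI_closed G -> G setT -> G `<=` measurable ->
  (forall A, G A -> \int[mu]_(x in A) (f x)%:E = \int[mu]_(x in A) (g x)%:E) ->
  forall A, <<s G >> A -> \int[mu]_(x in A) (f x)%:E = \int[mu]_(x in A) (g x)%:E.
Proof.
move=> intf intg GI GT Gm fg.
pose H := [set A | measurable A /\
  \int[mu]_(x in A) (f x)%:E = \int[mu]_(x in A) (g x)%:E].
suff GH : <<s G >> `<=` H by move=> A /GH[].
apply: (lambda_system_subset GI) => //; last first.
  by move=> A GA; split; [exact: Gm|exact: fg].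
apply/dynkin_lambda_system; split.
- by split; [exact: measurableT|exact: fg].
- move=> A [mA fgA]; split; first exact: measurableC.
  by rewrite !integral_setC // fgA fg.
- move=> F tF HF; have mF k : measurable (F k) by have [] := HF k.
  have mUF : measurable (\bigcup_k F k) by exact: bigcupT_measurable.
  split => //.
  rewrite !integral_bigcup //; first by apply: eq_eseriesr => k _; have [] := HF k.
  + exact: integrableS measurableT mUF (@subsetT _ _) intg.
  + exact: integrableS measurableT mUF (@subsetT _ _) intf.
Qed.

Lemma integral_mrestr (B D : set T) (mB : measurable B) (f : T -> \bar R) :
  measurable D -> measurable_fun D f ->
  \int[mrestr mu mB]_(x in D) f x = \int[mu]_(x in D `&` B) f x.
Proof.
move=> mD mf.
have mDB : measurable (D `&` B) by exact: measurableI.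
rewrite -{1}(setUIDK D B) integral_setU //; last 3 first.
- exact: measurableD.
- by rewrite setUIDK.
- by apply/disj_set2P; rewrite setDE setIACA setICr setI0.
transitivity (\int[mu]_(x in D `&` B) f x + \int[mzero]_(x in D `\` B) f x).
  congr (_ + _); apply: eq_measure_integral => A mA AD /=.
  - by rewrite /mrestr setIidl // => x /AD [].
  - rewrite /mrestr /mzero (_ : A `&` B = set0) ?measure0 //.
    by apply/seteqP; split => x // [/AD [_ nB] Bx].
by rewrite integral_measure_zero adde0.
Qed.

End integral_lemmas.

Section independent_event.
Context {d0 : measure_display} {T : measurableType d0} {R : realType}.
Context {P : probability T R} {Gen : set (set T)}.
Hypothesis GP : <<s Gen >> `<=` measurable.
Local Notation TG := (g_sigma_algebraType Gen).
Local Open Scope ereal_scope.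

Let measurable_id_sub : measurable_fun setT (id : T -> TG).
Proof. by move=> _ A mA; rewrite setTI; exact: GP. Qed.

Let sub_measurable_fun (Y : T -> \bar R) :
  measurable_fun (setT : set TG) Y -> measurable_fun (setT : set T) Y.
Proof.
move=> mY _ A mA; rewrite setTI; apply: GP.
by have := mY measurableT A mA; rewrite setTI.
Qed.

Section trace.
Context {B : set T}.
Hypothesis mB : measurable B.

(* A |-> P (A `&` B) on the sub-sigma-algebra; the two unused proof arguments
   make the measure instance below inferable. *)
Definition mtrace (_ : <<s Gen >> `<=` measurable) (_ : measurable B)
  (A : set TG) : \bar R := P (A `&` B).

Let mtrace0 : mtrace GP mB set0 = 0. Proof. by rewrite /mtrace set0I measure0. Qed.

Let mtrace_ge0 A : 0 <= mtrace GP mB A. Proof. exact: measure_ge0. Qed.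

Let mtrace_sigma_additive : semi_sigma_additive (mtrace GP mB).
Proof.
move=> F mF tF mU; rewrite /mtrace setI_bigcupl.
have mFB i : measurable (F i `&` B : set T).
  by apply: measurableI => //; apply: GP; exact: mF.
apply: measure_sigma_additive => //; apply/trivIsetP => i j _ _ ij.
move/trivIsetP : tF => /(_ i j Logic.I Logic.I ij).
by rewrite setIACA => ->; rewrite set0I.
Qed.

HB.instance Definition _ := isMeasure.Build _ _ _ (mtrace GP mB)
  mtrace0 mtrace_ge0 mtrace_sigma_additive.

Lemma integral_mtrace (Y : T -> \bar R) (D : set T) :
  <<s Gen >> D -> measurable_fun (setT : set TG) Y -> (forall x, 0 <= Y x) ->
  \int[mtrace GP mB]_(x in D) Y x = \int[P]_(x in D `&` B) Y x.
Proof.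
move=> GD mY Y0.
rewrite -integral_mrestr; last 2 first.
- exact: GP.
- exact: measurable_funTS (sub_measurable_fun _ mY).
have := @ge0_integral_pushforward _ _ T TG R id measurable_id_sub (mrestr P mB) D Y GD
  (measurable_funTS mY) (fun y _ => Y0 y).
by rewrite preimage_id => <-; apply: eq_measure_integral.
Qed.

End trace.

Context {B : set T}.
Hypothesis mB : measurable B.
Hypothesis indepB : forall C, <<s Gen >> C -> P (C `&` B) = P C * P B.

(* Independence makes [mtrace B] equal to [P B] times [mtrace setT], i.e. [P],
   on <<s Gen >>. *)
Lemma ge0_integral_setI_indep (Y : T -> \bar R) (D : set T) :
  <<s Gen >> D -> measurable_fun (setT : set TG) Y -> (forall x, 0 <= Y x) ->
  \int[P]_(x in D `&` B) Y x = P B * \int[P]_(x in D) Y x.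
Proof.
move=> GD mY Y0.
have PB : P B = (fine (P B))%:E by rewrite fineK // fin_num_measure.
have PB0 : (0 <= fine (P B))%R by rewrite fine_ge0 // measure_ge0.
rewrite -integral_mtrace //.
rewrite (eq_measure_integral (mscale (NngNum PB0) (mtrace GP measurableT))); last first.
  move=> A GA _; change (P (A `&` B) = (fine (P B))%:E * P (A `&` setT)).
  by rewrite setIT -PB indepB // muleC.
rewrite ge0_integral_mscale //=; last exact: measurable_funTS.
by rewrite integral_mtrace // setIT -PB.
Qed.

Lemma integral_setI_indep (f : T -> R) (D : set T) :
  <<s Gen >> D -> measurable_wrt <<s Gen >> f -> P.-integrable setT (EFin \o f) ->
  \int[P]_(x in D `&` B) (f x)%:E = P B * \int[P]_(x in D) (f x)%:E.
Proof.
move=> GD mf intf.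
have mD : measurable D := GP _ GD.
have mfG : measurable_fun (setT : set TG) (EFin \o f).
  by apply/measurable_EFinP => _ A mA; rewrite setTI; exact: mf.
have intD : P.-integrable D (EFin \o f) by exact: integrableS intf.
rewrite [LHS]integralE [in RHS]integralE.
rewrite !ge0_integral_setI_indep //; last 2 first.
- exact: measurable_funeneg.
- exact: measurable_funepos.
rewrite [RHS]muleBr; [by []|exact: fin_num_measure|].
apply: fin_num_adde_defl; rewrite fin_numN.
exact: (integrable_fin_num mD (integrable_funeneg mD intD)).
Qed.

End independent_event.

Section independent_processes.
Context {d0 : measure_display} {T : measurableType d0} {R : realType}.
Context {P : probability T R}.
Local Open Scope ereal_scope.

Section setI.
Context {n : nat} {N : 'I_n -> R -> T -> R}.
Hypothesis Nind : indep_processes P N.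

Lemma indep_processes_setI (i : 'I_n) (C : set T) (A : 'I_n -> set T) :
  procF (N i) C -> (forall j, j != i -> procF (N j) (A j)) ->
  P (C `&` \bigcap_(j in [set j | j != i]) A j) =
  P C * P (\bigcap_(j in [set j | j != i]) A j).
Proof.
move=> NC NA.
have indep D : procF (N i) D ->
    P (D `&` \bigcap_(j in [set j | j != i]) A j) =
    P D * \prod_(j < n | j != i) P (A j).
  move=> ND.
  have -> : D `&` \bigcap_(j in [set j | j != i]) A j =
            \bigcap_(j in setT) (if j == i then D else A j).
    apply/seteqP; split => [x [Dx Ax] j _|x Kx]; first by case: ifPn => // /Ax.
    split; first by have := Kx i I; rewrite eqxx.
    by move=> j /= /negbTE ji; have := Kx j I; rewrite ji.
  rewrite Nind; last by move=> j; case: ifPn => [/eqP ->|/NA].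
  by rewrite (bigD1 i) //= eqxx; congr (_ * _); apply: eq_bigr => j /negbTE ->.
have := indep setT g_sigma_setT; rewrite setTI probability_setT mul1e => ->.
exact: indep.
Qed.

End setI.

Lemma indep_processes_widen n m (h : (n <= m)%N) (N : 'I_m -> R -> T -> R) :
  indep_processes P N -> indep_processes P (fun i => N (widen_ord h i)).
Proof.
move=> Nind A NA.
pose B (j : 'I_m) := if insub (val j) is Some i then A i else setT.
have BA i : B (widen_ord h i) = A i.
  by rewrite /B insubT //= => ?; congr A; apply: val_inj.
have NB j : procF (N j) (B j).
  rewrite /B; case: insubP => [i _ ij|_]; last exact: g_sigma_setT.
  by have -> : j = widen_ord h i by apply: val_inj.
have -> : \bigcap_(i in setT) A i = \bigcap_(j in setT) B j.
  apply/seteqP; split => x Ax j _; last by rewrite -BA; exact: Ax.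
  by rewrite /B; case: insubP => // i _ _; exact: Ax.
rewrite Nind // (bigID (fun j : 'I_m => (val j < n)%N)) /= [X in _ * X]big1 ?mule1.
  by rewrite (big_ord_narrow h); apply: eq_bigr => i _; rewrite BA.
by move=> j /negbTE jn; rewrite /B insubF ?probability_setT.
Qed.

End independent_processes.

Section rectangles.
Context {d0 : measure_display} {T : measurableType d0} {n : nat}.
Variable G : 'I_n -> set (set T).
Hypothesis GT : forall j, G j setT.

Definition rectangles : set (set T) :=
  [set \bigcap_(j in setT) A j | A in [set A | forall j, G j (A j)]].

Lemma rectanglesT : rectangles setT.
Proof. by exists (fun _ => setT) => //; apply/seteqP; split. Qed.

Lemma rectangles_setI_closed : (forall j, setI_closed (G j)) -> setI_closed rectangles.
Proof.
move=> GI _ _ [A GA <-] [B GB <-]; exists (fun j => A j `&` B j).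
  by move=> j; exact: GI.
by rewrite bigcapI.
Qed.

Lemma rectangles_sub_measurable : (forall j, G j `<=` measurable) ->
  rectangles `<=` measurable.
Proof.
move=> Gm _ [A GA <-]; apply: fin_bigcap_measurable => // j _; exact: Gm.
Qed.

Lemma sjoin_sub_rectangles : sjoin G `<=` <<s rectangles >>.
Proof.
apply: smallest_sub; first exact: smallest_sigma_algebra.
move=> B [i _ GB]; apply: sub_gen_smallest.
exists (fun j => if j == i then B else setT).
  by move=> j; case: ifPn => [/eqP -> //|_]; exact: GT.
apply/seteqP; split => [x /(_ i I)|x Bx j _]; first by rewrite eqxx.
by case: ifP.
Qed.

End rectangles.

Section sum_of_processes.
Context {d0 : measure_display} {T : measurableType d0} {R : realType}.
Context {P : probability T R} {n : nat} {N : 'I_n -> R -> T -> R}.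
Hypothesis Nint : forall i t, 0 <= t -> P.-integrable setT (EFin \o N i t).
Local Open Scope ereal_scope.

Let Nmeasurable i : procF (N i) `<=` measurable.
Proof.
by apply: procF_sub_measurable => t t0; apply: measurable_int_EFin; exact: Nint.
Qed.

Lemma integrable_sum_processes D (t : 'I_n -> R) : measurable D -> pos_param t ->
  P.-integrable D (EFin \o (fun w => \sum_(i < n) N i (t i) w)%R).
Proof.
move=> mD t0; rewrite (_ : _ \o _ = fun w => \sum_(i < n) (N i (t i) w)%:E).
  apply: (integrable_sum mD) => i _.
  exact: (integrableS measurableT mD (@subsetT _ D) (Nint i _ (t0 i))).
by apply/funext => w; rewrite /= sumEFin.
Qed.

Lemma martingale1_of_nparam_sum :
  nparam_martingale P (fun t => sjoin (fun i => natF (N i) (t i)))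
    (fun t w => \sum_(i < n) N i (t i) w)%R ->
  forall i, martingale1 P (natF (N i)) (N i).
Proof.
move=> [_ [_ Smart]] i; split; first exact: Nint.
split; first by move=> t; exact: natF_adapted.
move=> s t s0 st A NA.
pose axis (u : R) (j : 'I_n) : R := if j == i then u else 0%R.
have axis_ge0 u : (0 <= u)%R -> pos_param (axis u).
  by move=> u0 j; rewrite /axis; case: ifP.
have mA : measurable A by apply: Nmeasurable; exact: natF_sub_procF NA.
pose C w := (\sum_(j < n | j != i) N j 0%R w)%R.
have sum_axis u : (fun w => (\sum_(j < n) N j (axis u j) w)%:E) =
                  (EFin \o N i u) \+ (EFin \o C).
  apply/funext => w; rewrite (bigD1 i) //= /axis eqxx EFinD; congr (_ + _%:E).
  by apply: eq_bigr => j /negbTE ->.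
have intA u : (0 <= u)%R -> P.-integrable A (EFin \o N i u).
  by move=> u0; exact: (integrableS measurableT mA (@subsetT _ A) (Nint i _ u0)).
have intC : P.-integrable A (EFin \o C).
  rewrite (_ : _ \o _ = fun w => \sum_(j < n | j != i) (N j 0%R w)%:E).
    apply: (integrable_sum mA) => j _.
    exact: (integrableS measurableT mA (@subsetT _ A) (Nint j _ (lexx _))).
  by apply/funext => w; rewrite /= sumEFin.
have NA' : sjoin (fun j => natF (N j) (axis s j)) A.
  by apply: sub_gen_smallest; exists i => //; rewrite /axis eqxx.
have st_axis : cwle (axis s) (axis t) by move=> j; rewrite /axis; case: ifP.
have := Smart _ _ (axis_ge0 _ s0) (axis_ge0 _ (le_trans s0 st)) st_axis _ NA'.
rewrite !sum_axis !integralD_EFin //; [|exact: intA|exact: intA (le_trans s0 st)].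
have Cfin : \int[P]_(w in A) (EFin \o C) w \is a fin_num := integrable_fin_num mA intC.
by move=> /(congr1 (fun x => x - \int[P]_(w in A) (EFin \o C) w)); rewrite !addeK.
Qed.

Hypothesis Nind : indep_processes P N.
Hypothesis Nmart : forall i, martingale1 P (natF (N i)) (N i).

Lemma martingale1_integral_rectangle i (s : 'I_n -> R) (A : 'I_n -> set T) (u : R) :
  (0 <= s i)%R -> (s i <= u)%R -> (forall j, natF (N j) (s j) (A j)) ->
  \int[P]_(w in \bigcap_(j in setT) A j) (N i u w)%:E =
  \int[P]_(w in \bigcap_(j in setT) A j) (N i (s i) w)%:E.
Proof.
move=> s0 su NA.
have NA' j : procF (N j) (A j) by apply: natF_sub_procF; exact: NA.
pose B := \bigcap_(j in [set j | j != i]) A j.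
have -> : \bigcap_(j in setT) A j = A i `&` B.
  apply/seteqP; split => [x Ax|x [Aix Bx] j _]; first by split => [|j _]; exact: Ax.
  by have [->|ji] := eqVneq j i; last exact: Bx.
have mB : measurable B.
  apply: fin_bigcap_measurable => [|j _]; first exact: finite_finset.
  by apply: Nmeasurable; exact: NA'.
have indepB C : procF (N i) C -> P (C `&` B) = P C * P B.
  by move=> NC; apply: (indep_processes_setI Nind) => // j _; exact: NA'.
have factor v : (0 <= v)%R ->
    \int[P]_(w in A i `&` B) (N i v w)%:E = P B * \int[P]_(w in A i) (N i v w)%:E.
  move=> v0; apply: (integral_setI_indep (Nmeasurable i) mB indepB).
  - exact: NA'.
  - exact: procF_adapted.
  - exact: Nint.
by rewrite !factor ?((Nmart i).2.2 _ _ s0 su _ (NA i)) //; exact: le_trans s0 su.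
Qed.

Lemma nparam_martingale_sum :
  nparam_martingale P (fun t => sjoin (fun i => natF (N i) (t i)))
    (fun t w => \sum_(i < n) N i (t i) w)%R.
Proof.
split; first by move=> t; exact: integrable_sum_processes measurableT.
split.
  move=> t t0; apply: measurable_wrt_sum => i B mB.
  by apply: sub_gen_smallest; exists i => //; exact: natF_adapted.
move=> s t s0 t0 st.
have NsT j : natF (N j) (s j) setT := g_sigma_setT.
move=> A /(sjoin_sub_rectangles _ NsT); apply: eq_integral_g_sigma.
- exact: integrable_sum_processes measurableT t0.
- exact: integrable_sum_processes measurableT s0.
- by apply: rectangles_setI_closed => j; exact: g_sigma_setI.
- exact: rectanglesT.
- apply: rectangles_sub_measurable => j B NB; apply: Nmeasurable.
  exact: natF_sub_procF NB.
move=> _ [{}A NA <-].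
have mA : measurable (\bigcap_(j in setT) A j).
  apply: fin_bigcap_measurable => // j _; apply: (Nmeasurable j).
  exact: natF_sub_procF.
have intA j v : (0 <= v)%R -> P.-integrable (\bigcap_(j in setT) A j) (EFin \o N j v).
  by move=> v0; exact: (integrableS measurableT mA (@subsetT _ _) (Nint j _ v0)).
under eq_integral do rewrite -sumEFin.
under [RHS]eq_integral do rewrite -sumEFin.
rewrite !integral_sum //; last 2 first.
- by move=> j; exact: intA (s0 j).
- by move=> j; exact: intA (t0 j).
apply: eq_bigr => i _; exact: martingale1_integral_rectangle.
Qed.

End sum_of_processes.

Theorem mainTheorem14 (d0 : measure_display) (T : measurableType d0)
  (R : realType) (P : probability T R) (d : nat)
  (M : 'I_d -> R -> T -> R)
  (Mint : forall i t, 0 <= t -> P.-integrable setT (EFin \o M i t))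
  (Mind : indep_processes P M) :
  let F := fun t : 'I_d -> R => sjoin (fun i => natF (M i) (t i)) in
  [<-> (nparam_martingale P F (fun t w => \sum_(i < d) M i (t i) w) /\
        (forall i s t, 0 <= s -> 0 <= t ->
           (\int[P]_w (M i s w)%:E = \int[P]_w (M i t w)%:E)%E));
       (forall (d' : nat) (h : (d' <= d)%N), (0 < d')%N ->
          nparam_martingale P
            (fun t : 'I_d' -> R => sjoin (fun i => natF (M (widen_ord h i)) (t i)))
            (fun t w => \sum_(i < d') M (widen_ord h i) (t i) w));
       (forall i, martingale1 P (natF (M i)) (M i))].
Proof.
move=> F; tfae.
- move=> [Smart _] d' h _; apply: nparam_martingale_sum.
  + by move=> i t; exact: Mint.
  + exact: indep_processes_widen.
  + by move=> i; exact: martingale1_of_nparam_sum Mint Smart _.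
- move=> Smart i; have d_gt0 : (0 < d)%N := leq_ltn_trans (leq0n i) (ltn_ord i).
  have := martingale1_of_nparam_sum (fun j => Mint _) (Smart d (leqnn d) d_gt0) i.
  by rewrite (_ : widen_ord (leqnn d) i = i) //; apply: val_inj.
- move=> Mmart; split; first exact: nparam_martingale_sum.
  have mean_eq i u v : 0 <= u -> u <= v ->
      (\int[P]_w (M i u w)%:E = \int[P]_w (M i v w)%:E)%E.
    by move=> u0 uv; rewrite ((Mmart i).2.2 u v u0 uv setT g_sigma_setT).
  move=> i s t s0 t0; have [st|/ltW ts] := leP s t; first exact: mean_eq.
  exact/esym/mean_eq.
Qed.
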